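(* Let $\mathcal{H}$ be a real $m^{\rm th}$-order $n$-dimensional Hankel tensor generated by ${\bf h}\in\mathbb{R}^{m(n-1)+1}$, where $m(n-1)$ is even, and let $r$ be the rank of its associated Hankel matrix $H$. Then $\mathcal{H}$ is a strong Hankel tensor if and only if either it admits a Vandermonde decomposition with all positive coefficients $$\mathcal{H}=\sum_{k=1}^r\alpha_k{\bf v}_k^{\circ m},\quad \alpha_k>0,\quad {\bf v}_k=(1,\xi_k,\dots,\xi_k^{n-1})^\top,\ \xi_k\in\mathbb{R},$$ or it admits an augmented Vandermonde decomposition with all positive coefficients $$\mathcal{H}=\sum_{k=1}^{r-1}\alpha_k{\bf v}_k^{\circ m}+\alpha_r{\bf e}_n^{\circ m},\quad \alpha_k>0,\quad {\bf v}_k=(1,\xi_k,\dots,\xi_k^{n-1})^\top,\ \xi_k\in\mathbb{R}.$$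
   Context: The Hankel tensor generated by ${\bf h}=(h_0,\dots,h_{m(n-1)})$ has entries $\mathcal{H}_{i_1\dots i_m}=h_{i_1+\dots+i_m}$, $0\le i_j\le n-1$. Its associated Hankel matrix is the square Hankel matrix $H$ of size $\frac{m(n-1)}{2}+1$ with $H_{ij}=h_{i+j}$ ($0\le i,j\le m(n-1)/2$). $\mathcal{H}$ is a strong Hankel tensor if $H$ is positive semi-definite. ${\bf v}^{\circ m}$ is the rank-one tensor with entries $v_{i_1}v_{i_2}\cdots v_{i_m}$, and ${\bf e}_n=(0,\dots,0,1)^\top\in\mathbb{R}^n$. *)

From HB Require Import structures.
From mathcomp Require Import all_boot all_order all_algebra.
From mathcomp Require Import reals.
Set Implicit Arguments. Unset Strict Implicit. Unset Printing Implicit Defensive.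
Import Order.TTheory GRing.Theory Num.Theory.
Local Open Scope ring_scope.

Notation tensor R m n := {ffun {ffun 'I_m -> 'I_n} -> R}.

Definition hankel_tensor (R : realType) (m n : nat)
  (h : 'rV[R]_(m * n.-1).+1) : tensor R m n :=
  [ffun idx : {ffun 'I_m -> 'I_n} => h 0 (inord (\sum_(j < m) (idx j : nat)))].

Definition hankel_matrix (R : realType) (m n : nat)
  (h : 'rV[R]_(m * n.-1).+1) : 'M[R]_((m * n.-1)./2.+1) :=
  \matrix_(i, j) h 0 (inord (i + j)).

Definition psd (R : realType) (k : nat) (A : 'M[R]_k) : Prop :=
  A^T = A /\ forall x : 'cV[R]_k, 0 <= (x^T *m A *m x) 0 0.

Definition strong_hankel (R : realType) (m n : nat) (h : 'rV[R]_(m * n.-1).+1) : Prop :=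
  psd (hankel_matrix h).

Definition rank1 (R : realType) (m n : nat) (v : 'rV[R]_n) : tensor R m n :=
  [ffun idx : {ffun 'I_m -> 'I_n} => \prod_(j < m) v 0 (idx j)].

Definition vandv (R : realType) (n : nat) (xi : R) : 'rV[R]_n :=
  \row_(i < n) xi ^+ i.

Definition e_last (R : realType) (n : nat) : 'rV[R]_n :=
  \row_(i < n) (i.+1 == n)%:R.

Definition tscale (R : realType) (m n : nat) (a : R) (T : tensor R m n) : tensor R m n :=
  [ffun idx => a * T idx].

From HB Require Import structures.
From mathcomp Require Import all_boot all_order all_algebra.
From mathcomp Require Import reals complex.
From mathcomp Require Import ring lra zify.
From Stdlib Require Import Classical.
Import Order.TTheory GRing.Theory Num.Theory.
Local Open Scope ring_scope.
Set Implicit Arguments. Unset Strict Implicit. Unset Printing Implicit Defensive.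

(* A Hankel matrix H = (h_(i+j))_(i,j <= N) is positive semidefinite iff the Riesz
   functional L('X^k) = h_k is nonnegative on squares of polynomials of degree <= N.
   Take q monic of least degree p with L(q^2) = 0 (or, when there is none below N, of
   degree N and L-orthogonal to 1, ..., 'X^(N-1)). By Cauchy-Schwarz q is orthogonal to
   'X^i whenever i + p < 2N, and since L is positive on squares of degree < p, q can
   have neither a double real root nor a pair of complex conjugate roots: it has p
   distinct real roots x. Gauss quadrature at these roots, with the positive weights
   L(l_x) of the Lagrange polynomials, reproduces h_0, ..., h_(2N-1), and h_(2N)
   exceeds it by L((q 'X^(N-p))^2) >= 0. Hence h_k = sum_x L(l_x) x^k + a [k = 2N],
   i.e. H = W^T D W with W a (possibly augmented) Vandermonde matrix of full row rank,
   which gives the rank of H and, read backwards, the converse. The entries of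
   v^(o m) and e_n^(o m) only depend on the sum of the indices, which turns this
   moment identity into the tensor decompositions. *)

Section RealFactor.
Variable R : rcfType.

Definition quad_factor (a b : R) : {poly R} := ('X - a%:P) ^+ 2 + (b ^+ 2)%:P.

Lemma size_quad_factor a b : size (quad_factor a b) = 3%N.
Proof.
rewrite size_polyDl size_exp_XsubC //.
by apply: leq_ltn_trans (size_polyC_leq1 _) _.
Qed.

Lemma quad_factor_neq0 a b : quad_factor a b != 0.
Proof. by rewrite -size_poly_eq0 size_quad_factor. Qed.

Local Open Scope complex_scope.

Lemma quad_factor_dvdp a b (g : {poly R}) : b != 0 ->
  root (map_poly (real_complex R) g) (a +i* b) -> quad_factor a b %| g.
Proof.
move=> b0 gab; set t := quad_factor a b; set r := g %% t.
have tab : (map_poly (real_complex R) t).[a +i* b] = 0.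
  rewrite /t /quad_factor rmorphD rmorphXn /= map_polyC /= rmorphB /= map_polyX.
  rewrite map_polyC /= hornerD hornerC horner_exp hornerXsubC expr2; simpc.
  by apply/eqP; rewrite eq_complex /= eqxx andbT addrC subr_eq0 expr2.
have rab : (map_poly (real_complex R) r).[a +i* b] = 0.
  move: gab; rewrite /root {1}(divp_eq g t) rmorphD rmorphM /= hornerD hornerM.
  by rewrite tab mulr0 add0r => /eqP.
have size_r : (size r <= 2)%N.
  by rewrite -ltnS -(size_quad_factor a b) ltn_modp quad_factor_neq0.
(* a real polynomial of degree <= 1 vanishing at a non-real point is zero *)
move: rab; rewrite (horner_coef_wide _ (n := 2)) ?size_map_poly //.
rewrite !big_ord_recl big_ord0 /= !coef_map /= expr0 expr1 mulr1 addr0.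
simpc => -[re im].
have r1 : r`_1 = 0 by move/eqP: im; rewrite mulf_eq0 (negbTE b0) orbF => /eqP.
have r0 : r`_0 = 0 by move: re; rewrite r1 mul0r addr0.
rewrite /dvdp -/r; apply/eqP/polyP => -[|[|k]]; rewrite coef0 //.
by rewrite nth_default // (leq_trans size_r).
Qed.

Lemma real_root_or_quad_factor (g : {poly R}) : (1 < size g)%N ->
  (exists x, root g x) \/
  exists a b (g' : {poly R}), b != 0 /\ g = quad_factor a b * g'.
Proof.
move=> sg; have : size (map_poly (real_complex R) g) != 1%N.
  by rewrite size_map_poly; apply: contraTneq sg => ->.
case/closed_rootP => -[a b] gab; have [b0|b0] := eqVneq b 0.
  by left; exists a; rewrite -(fmorph_root (real_complex R)); move: gab; rewrite b0.
right; have /dvdpP [g' ->] := quad_factor_dvdp b0 gab.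
by exists a, b, g'; rewrite mulrC.
Qed.

Local Close Scope complex_scope.

Lemma squarefree_monic_split (q : {poly R}) : q \is monic ->
  (forall x g, q <> ('X - x%:P) ^+ 2 * g) ->
  (forall a b g, b != 0 -> q <> quad_factor a b * g) ->
  exists s : seq R, uniq s /\ q = \prod_(x <- s) ('X - x%:P).
Proof.
move=> qmon no_sqr no_quad.
suff split_cofactor d s g : uniq s -> q = \prod_(x <- s) ('X - x%:P) * g ->
    size g = d.+1 -> exists s', uniq s' /\ q = \prod_(x <- s') ('X - x%:P).
  apply: (split_cofactor (size q).-1 [::] q); rewrite ?big_nil ?mul1r //.
  by rewrite prednK // size_poly_gt0 monic_neq0.
elim: d s g => [|d IHd] s g us qE sg.
  have gC : g = (g`_0)%:P by apply: size1_polyC; rewrite sg.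
  have g_lead : g`_0 = 1.
    rewrite -(monicP qmon) {1}qE lead_coef_monicM ?monic_prod_XsubC //.
    by rewrite [in lead_coef g]gC lead_coefC.
  by exists s; rewrite qE gC g_lead mulr1.
have sg1 : (1 < size g)%N by rewrite sg.
have [[x gx]|[a [b [g' [b0 gE]]]]] := real_root_or_quad_factor sg1.
- have [g' gE] := factor_theorem _ _ gx.
  have [xs|xNs] := boolP (x \in s).
    exfalso; apply: (no_sqr x (\prod_(y <- rem x s) ('X - y%:P) * g')).
    by rewrite qE gE (big_rem x xs) /=; ring.
  apply: (IHd (x :: s) g') => /=; first by rewrite xNs.
    by rewrite qE gE big_cons; ring.
  have g'0 : g' != 0 by apply: contra_eq_neq sg => g'0; rewrite gE g'0 mul0r size_poly0.
  by move: sg; rewrite gE size_mul ?polyXsubC_eq0 // size_XsubC addn2 => -[].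
- by exfalso; apply: (no_quad a b (\prod_(x <- s) ('X - x%:P) * g') b0); rewrite qE gE; ring.
Qed.

End RealFactor.

Lemma poly_coef_wide (R : nzSemiRingType) (n : nat) (p : {poly R}) :
  (size p <= n)%N -> p = \sum_(i < n) p`_i *: 'X^i.
Proof.
move=> sp; rewrite -poly_def; apply/polyP => k; rewrite coef_poly.
by case: ltnP => // nk; rewrite nth_default // (leq_trans sp nk).
Qed.

Section Lagrange.
Variables (F : fieldType) (s : seq F).

Definition lagr (x : F) : {poly F} :=
  (\prod_(y <- s | y != x) (x - y))^-1 *: \prod_(y <- s | y != x) ('X - y%:P).

Lemma horner_lagr x z : z \in s -> (lagr x).[z] = (z == x)%:R.
Proof.
move=> zs; rewrite /lagr hornerZ horner_prod.
under [in X in _ * X]eq_bigr do rewrite hornerXsubC.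
have [->|zx] := eqVneq z x.
  rewrite mulVf // prodf_seq_neq0; apply/allP => y _; apply/implyP => yx.
  by rewrite subr_eq0 eq_sym.
suff -> : \prod_(y <- s | y != x) (z - y) = 0 by rewrite mulr0.
by apply/eqP; rewrite prodf_seq_eq0; apply/hasP; exists z; rewrite // zx subrr eqxx.
Qed.

Lemma size_lagr x : x \in s -> (size (lagr x) <= size s)%N.
Proof.
move=> xs; apply: leq_trans (size_scale_leq _ _) _.
rewrite -big_filter size_prod_XsubC size_filter.
rewrite -(count_predC (fun y => y != x) s) -addn1 leq_add2l -has_count.
by apply/hasP; exists x => //=; rewrite eqxx.
Qed.

Lemma lagr_interp (v : {poly F}) : uniq s -> (size v <= size s)%N ->
  v = \sum_(x <- s) v.[x] *: lagr x.
Proof.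
move=> us sv; apply/eqP; rewrite -subr_eq0; apply/negPn/negP => D0.
set D := v - _ in D0.
have D_roots : all (root D) s.
  apply/allP => z zs; rewrite /root /D hornerD hornerN horner_sum (bigD1_seq z) //=.
  rewrite hornerZ horner_lagr // eqxx mulr1 big1_seq ?addr0 ?subrr //.
  by move=> x /andP[xz _]; rewrite hornerZ horner_lagr // eq_sym (negbTE xz) mulr0.
have := max_poly_roots D0 D_roots us; rewrite ltnNge; apply/negP/negPn.
apply: leq_trans (size_polyD _ _) _; rewrite geq_max sv size_polyN big_seq.
apply: (big_ind (fun P : {poly F} => size P <= size s)%N); rewrite ?size_poly0 //.
  by move=> P Q sP sQ; apply: leq_trans (size_polyD _ _) _; rewrite geq_max sP sQ.
by move=> x xs; apply: leq_trans (size_scale_leq _ _) (size_lagr xs).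
Qed.

End Lagrange.

Section MomentFunctional.
Variables (R : rcfType) (N : nat) (h : nat -> R).

Definition riesz (P : {poly R}) : R := \sum_(k < N.*2.+1) P`_k * h k.

Lemma rieszD P Q : riesz (P + Q) = riesz P + riesz Q.
Proof. by rewrite /riesz -big_split; apply: eq_bigr => k _; rewrite coefD mulrDl. Qed.

Lemma rieszZ c P : riesz (c *: P) = c * riesz P.
Proof. by rewrite /riesz mulr_sumr; apply: eq_bigr => k _; rewrite coefZ mulrA. Qed.

Lemma riesz0 : riesz 0 = 0.
Proof. by rewrite -(scale0r 0) rieszZ mul0r. Qed.

Lemma rieszB P Q : riesz (P - Q) = riesz P - riesz Q.
Proof. by rewrite rieszD -scaleN1r rieszZ mulN1r. Qed.

Lemma riesz_sum (I : Type) (r : seq I) (Pr : pred I) (F : I -> {poly R}) :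
  riesz (\sum_(i <- r | Pr i) F i) = \sum_(i <- r | Pr i) riesz (F i).
Proof. exact: (big_morph riesz rieszD riesz0). Qed.

Lemma rieszXn k : (k <= N.*2)%N -> riesz 'X^k = h k.
Proof.
rewrite -ltnS => kN; rewrite /riesz (bigD1 (Ordinal kN)) //= coefXn eqxx mul1r.
rewrite big1 ?addr0 // => j /eqP jk; rewrite coefXn.
by case: eqP => [e|]; [case: jk; apply: val_inj | rewrite mul0r].
Qed.

Lemma riesz_mul_coef (f g : {poly R}) : (size f <= N.+1)%N -> (size g <= N.+1)%N ->
  riesz (f * g) = \sum_(i < N.+1) \sum_(j < N.+1) f`_i * g`_j * h (i + j).
Proof.
move=> sf sg; rewrite {1}(poly_coef_wide sf) {1}(poly_coef_wide sg) mulr_suml riesz_sum.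
apply: eq_bigr => i _; rewrite mulr_sumr riesz_sum; apply: eq_bigr => j _.
rewrite -scalerAl -scalerAr scalerA -exprD rieszZ rieszXn //.
by have := ltn_ord i; have := ltn_ord j; lia.
Qed.

Lemma riesz_mulr_coef (q g : {poly R}) :
  riesz (q * g) = \sum_(t < size g) g`_t * riesz (q * 'X^t).
Proof.
rewrite {1}(poly_coef_wide (leqnn (size g))) mulr_sumr riesz_sum.
by apply: eq_bigr => t _; rewrite -scalerAr rieszZ.
Qed.

Hypothesis riesz_sqr_ge0 : forall f : {poly R}, (size f <= N.+1)%N -> 0 <= riesz (f * f).

(* Cauchy-Schwarz: t |-> riesz ((f + t g)^2) = 2 t c + t^2 d is nonnegative, so c = 0. *)
Lemma riesz_mul_eq0 (f g : {poly R}) : (size f <= N.+1)%N -> (size g <= N.+1)%N ->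
  riesz (f * f) = 0 -> riesz (f * g) = 0.
Proof.
move=> sf sg ff0; set c := riesz (f * g); set d := riesz (g * g).
have d_ge0 : 0 <= d := riesz_sqr_ge0 sg.
have quad_ge0 t : 0 <= t * c *+ 2 + t * t * d.
  have sfg : (size (f + t *: g)%R <= N.+1)%N.
    apply: leq_trans (size_polyD _ _) _; rewrite geq_max sf /=.
    exact: leq_trans (size_scale_leq _ _) sg.
  have := riesz_sqr_ge0 sfg.
  rewrite mulrDl !mulrDr -!scalerAl -!scalerAr scalerA !rieszD !rieszZ ff0 (mulrC g f).
  by rewrite -/c -/d add0r addrA mulr2n.
have d1_gt0 : 0 < d + 1 by lra.
have := quad_ge0 (- c / (d + 1)); set t := - c / (d + 1) => tc_ge0.
have cE : c = - (t * (d + 1)) by rewrite /t mulfVK ?gt_eqF // opprK.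
have : 0 <= - (c * c) * (d + 2).
  have -> : - (c * c) * (d + 2) = (t * c *+ 2 + t * t * d) * ((d + 1) * (d + 1)).
    by rewrite cE; ring.
  by apply: mulr_ge0 => //; nra.
nra.
Qed.

Lemma riesz_mulXn_eq0 (q : {poly R}) (p : nat) : size q = p.+1 -> (p <= N)%N ->
  riesz (q * q) = 0 -> forall i, (i + p < N.*2)%N -> riesz (q * 'X^i) = 0.
Proof.
move=> sq pN qq0 i; elim/ltn_ind: i => i IHi ipN.
have sqN : (size q <= N.+1)%N by rewrite sq.
have [iN|Ni] := leqP i N; first by apply: riesz_mul_eq0; rewrite ?size_polyXn.
have q0 : q != 0 by rewrite -size_poly_eq0 sq.
(* for i > N, go through the null polynomial q 'X^(i-N), of size <= N+1 *)
set w := q * 'X^(i - N).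
have sw : (size w <= N.+1)%N by rewrite size_mulXn // sq; lia.
have ww0 : riesz (w * w) = 0.
  have -> : w * w = q * (q * 'X^((i - N) + (i - N))) by rewrite /w exprD; ring.
  rewrite riesz_mulr_coef big1 // => t _.
  have ti : (t < i - N + (i - N) + p.+1)%N by rewrite -sq -size_mulXn.
  by rewrite IHi ?mulr0 //; lia.
have := riesz_mul_eq0 sw (eq_leq (size_polyXn R N)) ww0.
by rewrite /w -mulrA -exprD subnK // ltnW.
Qed.

Definition orth_poly (p : nat) (q : {poly R}) : Prop :=
  [/\ q \is monic, size q = p.+1, (p <= N)%N,
      forall g : {poly R}, g != 0 -> (size g <= p)%N -> 0 < riesz (g * g) &
      forall i, (i + p < N.*2)%N -> riesz (q * 'X^i) = 0].

Lemma orth_poly_normalize p (f : {poly R}) : f != 0 -> size f = p.+1 -> (p <= N)%N ->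
  (forall g : {poly R}, g != 0 -> (size g <= p)%N -> 0 < riesz (g * g)) ->
  (forall i, (i + p < N.*2)%N -> riesz (f * 'X^i) = 0) ->
  orth_poly p ((lead_coef f)^-1 *: f).
Proof.
move=> f0 sf pN pos fXi; have lf0 : lead_coef f != 0 by rewrite lead_coef_eq0.
split => //; first by apply/monicP; rewrite lead_coefZ mulVf.
  by rewrite size_scale ?invr_eq0.
by move=> i ip; rewrite -scalerAl rieszZ fXi ?mulr0.
Qed.

Lemma orth_poly_of_null k : (k <= N)%N ->
  (exists f : {poly R}, [/\ f != 0, size f = k.+1 & riesz (f * f) = 0]) ->
  exists p q, orth_poly p q.
Proof.
elim/ltn_ind: k => k IHk kN [f [f0 sf ff0]].
have [[g [j [jk g0 sg gg0]]]|min_f] :=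
  classic (exists (g : {poly R}) j, [/\ (j < k)%N, g != 0, size g = j.+1 & riesz (g * g) = 0]).
  by apply: (IHk j) => //; [apply: leq_trans (ltnW jk) kN | exists g].
exists k, ((lead_coef f)^-1 *: f); apply: orth_poly_normalize => //.
  move=> g g0 sgk; have sg0 : (0 < size g)%N by rewrite size_poly_gt0.
  rewrite lt_def riesz_sqr_ge0 ?andbT; last by lia.
  apply/eqP => gg0; apply: min_f; exists g, (size g).-1.
  by split; rewrite ?prednK //; lia.
exact: riesz_mulXn_eq0 ff0.
Qed.

(* f comes from a nonzero vector in the left kernel of the N+1 by N Hankel block *)
Lemma exists_riesz_orthXn : exists f : {poly R},
  [/\ f != 0, (size f <= N.+1)%N & forall i, (i < N)%N -> riesz (f * 'X^i) = 0].
Proof.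
set A : 'M[R]_(N.+1, N) := \matrix_(j, i) h (j + i).
have [i0 [j0 u0]] : exists i j, kermx A i j != 0.
  apply/matrix0Pn; rewrite -mxrank_eq0 mxrank_ker subn_eq0 -ltnNge ltnS.
  exact: rank_leq_col.
set u := row i0 (kermx A).
have uA : u *m A = 0 by rewrite /u -row_mul mulmx_ker row0.
exists (\poly_(j < N.+1) u 0 (inord j)); split; first last.
- move=> i iN; have iN1 : (i < N.+1)%N by lia.
  rewrite riesz_mul_coef ?size_poly ?size_polyXn //.
  transitivity ((u *m A) 0 (Ordinal iN)); last by rewrite uA mxE.
  rewrite [RHS]mxE; apply: eq_bigr => j _.
  rewrite (bigD1 (Ordinal iN1)) //= coefXn eqxx mulr1 big1 ?addr0; last first.
    move=> l /eqP li; rewrite coefXn; case: eqP => [e|]; last by rewrite mulr0 mul0r.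
    by case: li; apply: val_inj.
  by rewrite coef_poly ltn_ord inord_val /A mxE.
- exact: size_poly.
apply: contra_neq u0 => /(congr1 (fun P : {poly R} => P`_j0)).
by rewrite coef_poly ltn_ord inord_val coef0 /u mxE.
Qed.

Lemma orth_poly_of_nondegenerate :
  (forall f : {poly R}, f != 0 -> (size f <= N)%N -> riesz (f * f) != 0) ->
  exists q, orth_poly N q.
Proof.
move=> nondeg; have [f [f0 sf fXi]] := exists_riesz_orthXn.
have sfN : size f = N.+1.
  apply/eqP; rewrite eqn_leq sf ltnNge; apply/negP => sfN.
  move/negP: (nondeg f f0 sfN); apply; apply/eqP.
  rewrite riesz_mulr_coef big1 // => t _.
  by rewrite fXi ?mulr0 //; apply: leq_trans (ltn_ord t) sfN.
exists ((lead_coef f)^-1 *: f); apply: orth_poly_normalize => //.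
  by move=> g g0 sg; rewrite lt_def nondeg //=; apply: riesz_sqr_ge0; lia.
by move=> i iN; apply: fXi; lia.
Qed.

Lemma exists_orth_poly : exists p q, orth_poly p q.
Proof.
have [[f [f0 sf ff0]]|nondeg] :=
  classic (exists f : {poly R}, [/\ f != 0, (size f <= N)%N & riesz (f * f) = 0]).
  apply: (@orth_poly_of_null (size f).-1); first by lia.
  by exists f; rewrite prednK ?size_poly_gt0.
have [q qorth] : exists q, orth_poly N q.
  by apply: orth_poly_of_nondegenerate => f f0 sf; apply/eqP => ff0; apply: nondeg; exists f.
by exists N, q.
Qed.

End MomentFunctional.

Section OrthPoly.
Variables (R : rcfType) (N : nat) (h : nat -> R) (p : nat) (q : {poly R}).
Hypothesis qorth : orth_poly N h p q.
Local Notation L := (riesz N h).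

Lemma orth_poly_neq0 : q != 0.
Proof. by case: qorth => _ sq _ _ _; rewrite -size_poly_eq0 sq. Qed.

Lemma riesz_orth_poly (g : {poly R}) : (size g + p <= N.*2)%N -> L (q * g) = 0.
Proof.
case: qorth => _ _ _ _ qXi sg; rewrite riesz_mulr_coef big1 // => t _.
by rewrite qXi ?mulr0 //; have := ltn_ord t; lia.
Qed.

(* In both lemmas below q = ('X - a)^2 g + c g with c >= 0 and deg (('X - a) g) < p,
   so that 0 = L (q g) = L ((('X - a) g)^2) + c L (g^2) > 0. *)
Lemma orth_poly_no_sqr_factor x (g : {poly R}) : q <> ('X - x%:P) ^+ 2 * g.
Proof.
case: qorth => _ sq pN pos _ qE.
have g0 : g != 0 by apply: contraNneq orth_poly_neq0 => g0; rewrite qE g0 mulr0.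
have Xx0 : 'X - x%:P != 0 by rewrite polyXsubC_eq0.
have [sg p1] : size g = p.-1 /\ (1 <= p)%N.
  move: sq; rewrite qE size_mul ?expf_neq0 // size_exp_XsubC => sq.
  by set sg := size g in sq *; split; lia.
have ug_gt0 : 0 < L (('X - x%:P) * g * (('X - x%:P) * g)).
  by apply: pos; rewrite ?mulf_neq0 // size_mul // size_XsubC sg; lia.
have ugE : ('X - x%:P) * g * (('X - x%:P) * g) = q * g by rewrite qE; ring.
by move: ug_gt0; rewrite ugE riesz_orth_poly ?sg ?ltxx //; lia.
Qed.

Lemma orth_poly_no_quad_factor a b (g : {poly R}) : b != 0 -> q <> quad_factor a b * g.
Proof.
case: qorth => _ sq pN pos _ b0 qE.
have g0 : g != 0 by apply: contraNneq orth_poly_neq0 => g0; rewrite qE g0 mulr0.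
have Xa0 : 'X - a%:P != 0 by rewrite polyXsubC_eq0.
have [sg p1] : size g = p.-1 /\ (1 <= p)%N.
  move: sq; rewrite qE size_mul ?quad_factor_neq0 // size_quad_factor => sq.
  by set sg := size g in sq *; split; lia.
have ug_gt0 : 0 < L (('X - a%:P) * g * (('X - a%:P) * g)).
  by apply: pos; rewrite ?mulf_neq0 // size_mul // size_XsubC sg; lia.
have gg_gt0 : 0 < L (g * g) by apply: pos; rewrite // sg; lia.
have : L (q * g) = L (('X - a%:P) * g * (('X - a%:P) * g)) + b ^+ 2 * L (g * g).
  by rewrite -rieszZ -rieszD qE /quad_factor -mul_polyC; congr L; ring.
rewrite riesz_orth_poly ?sg; last by lia.
have : 0 < b ^+ 2 * L (g * g) by rewrite mulr_gt0 // exprn_even_gt0.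
lra.
Qed.

Lemma orth_poly_split : exists s : seq R, uniq s /\ q = \prod_(x <- s) ('X - x%:P).
Proof.
case: qorth => qmon _ _ _ _; apply: squarefree_monic_split => //.
  exact: orth_poly_no_sqr_factor.
exact: orth_poly_no_quad_factor.
Qed.

Section Quadrature.
Variable s : seq R.
Hypotheses (us : uniq s) (qE : q = \prod_(x <- s) ('X - x%:P)).

Lemma size_orth_roots : size s = p.
Proof. by case: qorth => _; rewrite qE size_prod_XsubC => -[]. Qed.

Lemma orth_poly_root x : x \in s -> q.[x] = 0.
Proof. by move=> xs; apply/eqP; rewrite qE -/(root _ x) root_prod_XsubC. Qed.

(* Gauss quadrature: divide P by q; the quotient is L-orthogonal to q and the
   remainder is interpolated at the roots of q. *)
Lemma riesz_quadrature (P : {poly R}) : (size P <= N.*2)%N ->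
  L P = \sum_(x <- s) L (lagr s x) * P.[x].
Proof.
move=> sP; rewrite {1}(divp_eq P q) rieszD mulrC riesz_orth_poly ?add0r; last first.
  case: qorth => _ sq pN _ _; rewrite size_divp ?orth_poly_neq0 // sq /=.
  by move: sP; set sp := size P; lia.
rewrite {1}(@lagr_interp _ s (P %% q)) //; last first.
  case: qorth => _ sq _ _ _.
  by rewrite size_orth_roots -ltnS -sq ltn_modp orth_poly_neq0.
rewrite riesz_sum; apply: eq_big_seq => x xs; rewrite rieszZ mulrC; congr (_ * _).
by rewrite {2}(divp_eq P q) hornerD hornerM orth_poly_root // mulr0 add0r.
Qed.

Lemma riesz_lagr_gt0 x : x \in s -> 0 < L (lagr s x).
Proof.
move=> xs; have lx1 : (lagr s x).[x] = 1 by rewrite horner_lagr // eqxx.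
have slx : (size (lagr s x) <= p)%N by rewrite -size_orth_roots size_lagr.
have <- : L (lagr s x * lagr s x) = L (lagr s x).
  rewrite riesz_quadrature; last first.
    apply: leq_trans (size_polyMleq _ _) _; case: qorth => _ _ pN _ _.
    by move: slx; set sl := size (lagr s x); lia.
  rewrite (bigD1_seq x) //= hornerM lx1 !mulr1 big1_seq ?addr0 // => y /andP[yx ys].
  by rewrite hornerM horner_lagr // (negbTE yx) mul0r mulr0.
case: qorth => _ _ _ pos _; apply: pos => //.
by apply: contra_eq_neq lx1 => ->; rewrite horner0 eq_sym oner_neq0.
Qed.

Lemma moments_quadrature k : (k < N.*2)%N -> h k = \sum_(x <- s) L (lagr s x) * x ^+ k.
Proof.
move=> kN; rewrite -(rieszXn h (ltnW kN)) riesz_quadrature ?size_polyXn //.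
by apply: eq_bigr => x _; rewrite hornerXn.
Qed.

Lemma top_moment_quadrature :
  h N.*2 = \sum_(x <- s) L (lagr s x) * x ^+ N.*2 + L ((q * 'X^(N - p)) * (q * 'X^(N - p))).
Proof.
case: qorth => qmon sq pN _ _; set w := q * 'X^(N - p).
have sw : size w = N.+1 by rewrite size_mulXn ?orth_poly_neq0 // sq; lia.
have sww : size (w * w) = N.*2.+1 by rewrite size_monicM ?monic_neq0 ?monicMr ?monicXn // sw; lia.
have wwXn : (size (w * w - 'X^(N.*2))%R <= N.*2)%N.
  apply/leq_sizeP => j jN; rewrite coefB coefXn.
  have [jlt|jgt|->] := ltngtP j N.*2; first by move: jN; rewrite leqNgt jlt.
    by rewrite nth_default ?sww // subr0.
  have : lead_coef (w * w) = 1 by apply/monicP; rewrite monicMl ?monicMr ?monicXn.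
  by rewrite lead_coefE sww => ->; rewrite subrr.
have := riesz_quadrature wwXn; rewrite rieszB rieszXn // => wwE.
rewrite -[h _](subKr (L (w * w))) wwE addrC -sumrN; congr (_ + _).
apply: eq_big_seq => x xs; rewrite hornerD hornerN hornerM /w hornerM.
by rewrite orth_poly_root // !mul0r hornerXn sub0r mulrN opprK.
Qed.

End Quadrature.
End OrthPoly.

(* The a-term is the contribution of e_n^(o m), whose only nonzero entry has index sum M. *)
Definition moment_rep (R : pzRingType) (M : nat) (h : nat -> R) (sz : nat)
    (al xi : 'I_sz -> R) (a : R) : Prop :=
  forall k, (k <= M)%N -> h k = \sum_(i < sz) al i * xi i ^+ k + a * (k == M)%:R.

Lemma moment_rep_of_riesz_sqr_ge0 (R : rcfType) (N : nat) (h : nat -> R) :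
  (forall f : {poly R}, (size f <= N.+1)%N -> 0 <= riesz N h (f * f)) ->
  exists sz (al xi : 'I_sz -> R) (a : R),
    [/\ forall i, 0 < al i, 0 <= a, injective xi, (sz <= N)%N & moment_rep N.*2 h al xi a].
Proof.
move=> riesz_sqr_ge0; have [p [q qorth]] := exists_orth_poly riesz_sqr_ge0.
have [s [us qE]] := orth_poly_split qorth.
have [_ sq pN _ _] := qorth.
have sumE (F : R -> R) : \sum_(x <- s) F x = \sum_(i < size s) F s`_i.
  by rewrite (big_nth 0) big_mkord.
exists (size s), (fun i => riesz N h (lagr s s`_i)), (fun i => s`_i).
exists (riesz N h ((q * 'X^(N - p)) * (q * 'X^(N - p)))); split.
- by move=> i; rewrite (riesz_lagr_gt0 qorth us qE) ?mem_nth.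
- by apply: riesz_sqr_ge0; rewrite size_mulXn ?(orth_poly_neq0 qorth) // sq; lia.
- by move=> i j /eqP; rewrite nth_uniq // => /eqP /val_inj.
- by rewrite (size_orth_roots qorth qE).
- move=> k; rewrite leq_eqVlt => /predU1P [->|kN].
    by rewrite (top_moment_quadrature qorth us qE) sumE eqxx mulr1.
  by rewrite (moments_quadrature qorth us qE kN) sumE ltn_eqF // mulr0 addr0.
Qed.

Section HankelMatrix.
Variables (F : fieldType) (N : nat) (h : nat -> F).

Definition hankel_mx : 'M[F]_N.+1 := \matrix_(i, j) h (i + j).

Definition vdm_mx sz (xi : 'I_sz -> F) : 'M[F]_(sz, N.+1) := \matrix_(k, j) xi k ^+ j.

(* row 0 is e_N = (0, ..., 0, 1), row (lift ord0 k) is the Vandermonde row of xi k *)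
Definition vdm_aug_mx sz (xi : 'I_sz -> F) : 'M[F]_(sz.+1, N.+1) :=
  \matrix_(k, j) if unlift ord0 k is Some k' then xi k' ^+ j else (j == N :> nat)%:R.

Definition aug_weight sz (al : 'I_sz -> F) (a : F) (k : 'I_sz.+1) : F :=
  if unlift ord0 k is Some k' then al k' else a.

Lemma hankel_mx_factor sz (W : 'M[F]_(sz, N.+1)) (d : 'I_sz -> F) :
  (forall i j : 'I_N.+1, h (i + j) = \sum_k d k * W k i * W k j) ->
  hankel_mx = W^T *m diag_mx (\row_k d k) *m W.
Proof.
move=> hE; rewrite mul_mx_diag; apply/matrixP => i j; rewrite !mxE hE.
by apply: eq_bigr => k _; rewrite !mxE; ring.
Qed.

Lemma hankel_mx_vdm sz (al xi : 'I_sz -> F) : moment_rep N.*2 h al xi 0 ->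
  hankel_mx = (vdm_mx xi)^T *m diag_mx (\row_k al k) *m vdm_mx xi.
Proof.
move=> rep; apply: hankel_mx_factor => i j.
rewrite rep; last by have := ltn_ord i; have := ltn_ord j; lia.
by rewrite mul0r addr0; apply: eq_bigr => k _; rewrite !mxE exprD mulrA.
Qed.

Lemma hankel_mx_vdm_aug sz (al xi : 'I_sz -> F) a : moment_rep N.*2 h al xi a ->
  hankel_mx = (vdm_aug_mx xi)^T *m diag_mx (\row_k aug_weight al a k) *m vdm_aug_mx xi.
Proof.
move=> rep; apply: hankel_mx_factor => i j.
have iN := ltn_ord i; have jN := ltn_ord j.
rewrite rep; last by lia.
rewrite big_ord_recl addrC /aug_weight !mxE unlift_none; congr (_ + _).
  rewrite -mulrA -natrM mulnb; congr (_ * (nat_of_bool _)%:R).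
  by apply/eqP/andP => [ijN|[/eqP -> /eqP ->]]; [split; apply/eqP; lia | rewrite addnn].
by apply: eq_bigr => k _; rewrite !mxE liftK exprD mulrA.
Qed.

Lemma row_free_poly_dual sz (W : 'M[F]_(sz, N.+1)) (P : 'I_sz -> {poly F}) :
  (forall k l, \sum_j W k j * (P l)`_j = (k == l)%:R) -> row_free W.
Proof.
move=> dual; apply/row_freeP; exists (\matrix_(j, l) (P l)`_j).
by apply/matrixP => k l; rewrite !mxE -dual; apply: eq_bigr => j _; rewrite mxE.
Qed.

Lemma vdm_row_mul_coef (x : F) (P : {poly F}) : (size P <= N.+1)%N ->
  \sum_(j < N.+1) x ^+ j * P`_j = P.[x].
Proof. by move=> sP; rewrite (horner_coef_wide _ sP); apply: eq_bigr => j _; rewrite mulrC. Qed.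

Lemma e_last_row_mul_coef (P : {poly F}) :
  \sum_(j < N.+1) (j == N :> nat)%:R * P`_j = P`_N.
Proof.
rewrite (bigD1 ord_max) //= eqxx mul1r big1 ?addr0 // => j jN.
suff /negbTE -> : (j : nat) != N by rewrite mul0r.
by apply: contra jN => /eqP jN; apply/eqP/val_inj.
Qed.

Lemma row_free_vdm sz (xi : 'I_sz -> F) : injective xi -> (sz <= N.+1)%N ->
  row_free (vdm_mx xi).
Proof.
move=> xi_inj szN; apply: (@row_free_poly_dual _ _ (fun l => lagr (codom xi) (xi l))) => k l.
under eq_bigr do rewrite mxE.
rewrite vdm_row_mul_coef ?horner_lagr ?codom_f ?(inj_eq xi_inj) //.
by apply: leq_trans (size_lagr (codom_f _ _)) _; rewrite size_codom card_ord.
Qed.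

Lemma row_free_vdm_aug sz (xi : 'I_sz -> F) : injective xi -> (sz <= N)%N ->
  row_free (vdm_aug_mx xi).
Proof.
move=> xi_inj szN; set q := \prod_(x <- codom xi) ('X - x%:P).
have sq : size q = sz.+1 by rewrite size_prod_XsubC size_codom card_ord.
have slagr l : (size (lagr (codom xi) (xi l)) <= sz)%N.
  by apply: leq_trans (size_lagr (codom_f _ _)) _; rewrite size_codom card_ord.
apply: (@row_free_poly_dual _ _ (fun l : 'I_sz.+1 =>
   if unlift ord0 l is Some l' then lagr (codom xi) (xi l') else q * 'X^(N - sz))) => k l.
under eq_bigr do rewrite mxE.
have [k' ->|->] := unliftP ord0 k; have [l' ->|->] := unliftP ord0 l.
- rewrite vdm_row_mul_coef ?horner_lagr ?codom_f ?(inj_eq xi_inj) ?(inj_eq lift_inj) //.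
  exact: leq_trans (slagr l') (leqW szN).
- rewrite vdm_row_mul_coef; last by rewrite size_mulXn -?size_poly_gt0 sq //; lia.
  have qk : q.[xi k'] = 0 by apply/rootP; rewrite root_prod_XsubC codom_f.
  by rewrite hornerM qk mul0r eq_sym (negbTE (neq_lift _ _)).
- by rewrite e_last_row_mul_coef nth_default ?(leq_trans (slagr l')) // eq_sym (negbTE (neq_lift _ _)).
  rewrite e_last_row_mul_coef coefMXn ltnNge leq_subr /= subKn //.
  have qmon : q \is monic by apply: monic_prod_XsubC.
  by move/monicP: qmon; rewrite lead_coefE sq.
Qed.

Lemma mxrank_mulmx_diag n sz (W : 'M[F]_(sz, n)) (d : 'I_sz -> F) :
  (forall k, d k != 0) -> row_free W -> \rank (W^T *m diag_mx (\row_k d k) *m W) = sz.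
Proof.
move=> d0 Wfree; rewrite mxrankMfree // -mxrank_tr trmx_mul tr_diag_mx trmxK.
rewrite mxrankMfree // mxrank_unit // unitmxE det_diag unitfE.
by apply/prodf_neq0 => k _; rewrite mxE.
Qed.

Lemma mxrank_hankel_rep sz (al xi : 'I_sz -> F) a : injective xi -> (sz <= N)%N ->
  (forall i, al i != 0) -> moment_rep N.*2 h al xi a -> \rank hankel_mx = (sz + (a != 0%R))%N.
Proof.
move=> xi_inj szN al0 rep; have [a0|a0] := eqVneq a 0.
  move: rep; rewrite a0 addn0 => /hankel_mx_vdm ->.
  by rewrite mxrank_mulmx_diag // row_free_vdm // (leqW szN).
rewrite (hankel_mx_vdm_aug rep) mxrank_mulmx_diag ?row_free_vdm_aug ?addn1 //.
by move=> k; rewrite /aug_weight; case: unliftP.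
Qed.

End HankelMatrix.

Section PsdHankel.
Variable R : realType.

Lemma psd_mulmx_diag n sz (W : 'M[R]_(sz, n)) (d : 'I_sz -> R) :
  (forall k, 0 <= d k) -> psd (W^T *m diag_mx (\row_k d k) *m W).
Proof.
move=> d_ge0; split; first by rewrite !trmx_mul tr_diag_mx trmxK mulmxA.
move=> x; have -> : x^T *m (W^T *m diag_mx (\row_k d k) *m W) *m x =
    (W *m x)^T *m diag_mx (\row_k d k) *m (W *m x) by rewrite trmx_mul !mulmxA.
rewrite mul_mx_diag mxE; apply: sumr_ge0 => k _; rewrite !mxE.
by rewrite mulrC mulrA mulr_ge0 // -expr2 sqr_ge0.
Qed.

Lemma psd_hankel_rep N (h : nat -> R) sz (al xi : 'I_sz -> R) a :
  (forall i, 0 <= al i) -> 0 <= a -> moment_rep N.*2 h al xi a -> psd (hankel_mx N h).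
Proof.
move=> al_ge0 a_ge0 /hankel_mx_vdm_aug ->; apply: psd_mulmx_diag => k.
by rewrite /aug_weight; case: unliftP.
Qed.

Lemma psd_hankel_riesz_sqr_ge0 N (h : nat -> R) : psd (hankel_mx N h) ->
  forall f : {poly R}, (size f <= N.+1)%N -> 0 <= riesz N h (f * f).
Proof.
move=> [_ Hpsd] f sf; have := Hpsd (\col_i f`_i).
suff -> : ((\col_i f`_i)^T *m hankel_mx N h *m \col_i f`_i) 0 0 = riesz N h (f * f) by [].
rewrite riesz_mul_coef // mxE exchange_big; apply: eq_bigr => j _.
by rewrite mxE mulr_suml; apply: eq_bigr => i _; rewrite !mxE; ring.
Qed.

End PsdHankel.

Lemma prod_natr_bool (R : comPzSemiRingType) (I : finType) (b : I -> bool) :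
  \prod_i ((b i)%:R : R) = [forall i, b i]%:R.
Proof.
have [all_b|/forallPn [i bi]] := boolP [forall i, b i].
  by rewrite big1 // => i _; rewrite (forallP all_b).
by rewrite (bigD1 i) //= (negbTE bi) mul0r.
Qed.

Lemma tscale0 (R : realType) m n (T : tensor R m n) : tscale 0 T = 0.
Proof. by apply/ffunP => idx; rewrite !ffunE mul0r. Qed.

Section HankelTensor.
Variables (R : realType) (m n : nat).
Hypothesis n_gt0 : (0 < n)%N.

Lemma index_sum_le (idx : {ffun 'I_m -> 'I_n}) : (\sum_j (idx j : nat) <= m * n.-1)%N.
Proof.
rewrite -[m in (_ <= m * _)%N]card_ord -sum_nat_const; apply: leq_sum => j _.
by rewrite -ltnS prednK.
Qed.

Lemma exists_index_sum k : (k <= m * n.-1)%N ->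
  exists idx : {ffun 'I_m -> 'I_n}, \sum_j (idx j : nat) = k.
Proof.
elim: m k => [|m' IHm] k km.
  by exists [ffun _ => Ordinal n_gt0]; rewrite big_ord0; lia.
set c := minn k n.-1.
have cn : (c < n)%N by apply: leq_ltn_trans (geq_minr _ _) _; rewrite prednK.
have [idx' idx'E] : exists idx' : {ffun 'I_m' -> 'I_n}, \sum_j (idx' j : nat) = (k - c)%N.
  apply: IHm; move: km; rewrite mulSn /c /minn; set y := (m' * n.-1)%N.
  by case: ltnP; lia.
exists [ffun j : 'I_m'.+1 => if unlift ord0 j is Some j' then idx' j' else Ordinal cn].
rewrite big_ord_recl !ffunE unlift_none.
under eq_bigr do rewrite ffunE liftK.
by rewrite idx'E /=; have := geq_minl k n.-1; rewrite -/c; lia.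
Qed.

Lemma rank1_vandv_entry (xi : R) (idx : {ffun 'I_m -> 'I_n}) :
  rank1 m (vandv n xi) idx = xi ^+ (\sum_j (idx j : nat)).
Proof. by rewrite ffunE -prodrXr; apply: eq_bigr => j _; rewrite mxE. Qed.

Lemma rank1_e_last_entry (idx : {ffun 'I_m -> 'I_n}) :
  rank1 m (e_last R n) idx = ((\sum_j (idx j : nat)) == m * n.-1)%:R.
Proof.
have top j : ((idx j).+1 == n) = ((idx j : nat) == n.-1).
  by apply/eqP/eqP; lia.
rewrite ffunE (eq_bigr (fun j => ((idx j : nat) == n.-1)%:R)); last first.
  by move=> j _; rewrite mxE top.
rewrite prod_natr_bool; congr (_%:R); apply/esym.
have idx_le j : (idx j <= n.-1)%N by rewrite -ltnS prednK.
have := leqif_sum (fun j (_ : true) => leqif_eq (idx_le j)).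
by rewrite sum_nat_const card_ord => -[_ ->].
Qed.

Lemma hankel_tensor_vdmE (h : 'rV[R]_(m * n.-1).+1) sz (al xi : 'I_sz -> R) a :
  hankel_tensor h = \sum_(k < sz) tscale (al k) (rank1 m (vandv n (xi k)))
                    + tscale a (rank1 m (e_last R n)) <->
  moment_rep (m * n.-1) (fun k => h 0 (inord k)) al xi a.
Proof.
have entryE idx : (\sum_(k < sz) tscale (al k) (rank1 m (vandv n (xi k)))
                   + tscale a (rank1 m (e_last R n))) idx =
    \sum_(k < sz) al k * xi k ^+ (\sum_j (idx j : nat))
    + a * ((\sum_j (idx j : nat)) == m * n.-1)%:R.
  rewrite ffunE sum_ffunE [tscale a _ _]ffunE rank1_e_last_entry; congr (_ + _).
  by apply: eq_bigr => k _; rewrite ffunE rank1_vandv_entry.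
split => [hE k km | rep].
  by have [idx <-] := exists_index_sum km; rewrite -entryE -hE ffunE.
by apply/ffunP => idx; rewrite entryE ffunE rep // index_sum_le.
Qed.

End HankelTensor.

Theorem theorem4 (R : realType) (m n : nat) (h : 'rV[R]_(m * n.-1).+1) :
  (2 <= m)%N -> (0 < n)%N -> ~~ odd (m * n.-1) ->
  let r : nat := \rank (hankel_matrix h) in
  strong_hankel h <->
  ((exists (alpha xi : 'I_r -> R),
       (forall k, 0 < alpha k) /\
       hankel_tensor h = \sum_(k < r) tscale (alpha k) (rank1 m (vandv n (xi k))))
   \/
   (0 < r)%N /\
   exists (alpha xi : 'I_r.-1 -> R) (a : R),
       (forall k, 0 < alpha k) /\ 0 < a /\
       hankel_tensor h = \sum_(k < r.-1) tscale (alpha k) (rank1 m (vandv n (xi k)))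
                         + tscale a (rank1 m (e_last R n))).
Proof.
move=> _ n_gt0 even_mn r.
set N := (m * n.-1)./2; set hk := fun k => h 0 (inord k).
have NE : N.*2 = (m * n.-1)%N by rewrite -[RHS]odd_double_half (negbTE even_mn).
have HE : hankel_matrix h = hankel_mx N hk by apply/matrixP => i j; rewrite !mxE.
rewrite /strong_hankel HE; split.
  move/psd_hankel_riesz_sqr_ge0/moment_rep_of_riesz_sqr_ge0.
  move=> [sz [al [xi [a [al_gt0 a_ge0 xi_inj szN rep]]]]].
  have rE : r = (sz + (a != 0%R))%N.
    by rewrite /r HE (mxrank_hankel_rep xi_inj szN _ rep) // => i; rewrite gt_eqF.
  rewrite NE -(hankel_tensor_vdmE n_gt0) in rep.
  have [a0|a0] := eqVneq a 0.
    by left; rewrite rE a0 eqxx /= addn0; exists al, xi; rewrite rep a0 tscale0 addr0.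
  right; rewrite rE a0 addn1; split => //; exists al, xi, a.
  by rewrite lt_def a0 a_ge0.
move=> [[al [xi [al_gt0 hE]]]|[_ [al [xi [a [al_gt0 [a_gt0 hE]]]]]]].
  apply: (@psd_hankel_rep _ _ _ _ al xi 0) => //; first by move=> i; apply: ltW.
  by rewrite NE -(hankel_tensor_vdmE n_gt0) tscale0 addr0.
apply: (@psd_hankel_rep _ _ _ _ al xi a); [by move=> i; apply: ltW | exact: ltW |].
by rewrite NE -(hankel_tensor_vdmE n_gt0).
Qed.
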